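(* Let $\mathcal{A}$ be a dual Banach algebra. If $\mathcal{A}$ is Johnson pseudo-Connes amenable, then $\mathcal{A}$ is pseudo-Connes amenable.
   Context: A dual Banach algebra is a Banach algebra $\mathcal{A}$ together with a closed $\mathcal{A}$-submodule $\mathcal{A}_*$ of $\mathcal{A}^*$ such that $\mathcal{A}=(\mathcal{A}_* )^*$. For a Banach $\mathcal{A}$-bimodule $E$, $\sigma wc(E)$ denotes the closed submodule of all $x\in E$ such that $a\mapsto a\cdot x$ and $a\mapsto x\cdot a$ are weak$^*$-weak continuous from $\mathcal{A}$ to $E$. $\mathcal{A}\hat{\otimes}\mathcal{A}$ is a bimodule via $a\cdot(b\otimes c)=ab\otimes c$, $(b\otimes c)\cdot a=b\otimes ca$; duals carry the dual actions. $\pi_{\mathcal{A}}:\mathcal{A}\hat{\otimes}\mathcal{A}\to\mathcal{A}$ is multiplication; $\pi_{\mathcal{A}}^{**}$ induces a bimodule map $\pi_{\sigma wc}:(\sigma wc((\mathcal{A}\hat{\otimes}\mathcal{A})^* ))^*\to\mathcal{A}$ (restriction of $\pi_{\mathcal{A}}^*$ to $\mathcal{A}_*$ lands in $\sigma wc((\mathcal{A}\hat{\otimes}\mathcal{A})^* )$, and $\pi_{\sigma wc}$ is its adjoint). Elements of $\mathcal{A}\hat{\otimes}\mathcal{A}$ are regarded in $(\sigma wc((\mathcal{A}\hat{\otimes}\mathcal{A})^* ))^*$ by restriction. $\mathcal{A}$ is pseudo-Connes amenable if there is a net $(M_\alpha)$ in $\mathcal{A}\hat{\otimes}\mathcal{A}$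 with $a\cdot M_\alpha-M_\alpha\cdot a\to0$ weak$^*$ in $(\sigma wc((\mathcal{A}\hat{\otimes}\mathcal{A})^* ))^*$ and $\pi_{\sigma wc}(M_\alpha)a\to a$ weak$^*$ in $\mathcal{A}$ for all $a\in\mathcal{A}$. With $i_{\mathcal{A}_*}:\mathcal{A}_*\hookrightarrow\mathcal{A}^*$ the canonical embedding, $\mathcal{A}$ is Johnson pseudo-Connes amenable if there is a (not necessarily bounded) net $(m_\alpha)$ in $(\mathcal{A}\hat{\otimes}\mathcal{A})^{**}$ with $\langle T,a\cdot m_\alpha\rangle=\langle T,m_\alpha\cdot a\rangle$ for all $a\in\mathcal{A}$, $T\in\sigma wc((\mathcal{A}\hat{\otimes}\mathcal{A})^* )$, $\alpha$, and $i_{\mathcal{A}_*}^*\pi_{\mathcal{A}}^{**}(m_\alpha)a\to a$ for every $a\in\mathcal{A}$. *)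

From HB Require Import structures.
From mathcomp Require Import all_boot all_order all_algebra.
From mathcomp Require Import all_classical all_reals all_analysis.
From mathcomp Require Export complex.
Set Implicit Arguments. Unset Strict Implicit. Unset Printing Implicit Defensive.
Import Order.TTheory GRing.Theory Num.Theory.
Import numFieldNormedType.Exports.
Local Open Scope ring_scope.
Local Open Scope classical_set_scope.

Section DualBanach.
Variables (K : numFieldType) (A : normedModType K) (mul : A -> A -> A).
Variable Astar : (A -> K) -> Prop.   (* the predual A_* as a subset of A^* *)

Definition banach_algebra : Prop :=
  [/\ forall a b c, mul a (mul b c) = mul (mul a b) c,
      forall k x y z, mul (k *: x + y) z = k *: mul x z + mul y z,
      forall k x y z, mul z (k *: x + y) = k *: mul z x + mul z y
    & forall a b, `|mul a b| <= `|a| * `|b| ].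

Definition lin_fun (f : A -> K) := forall k x y, f (k *: x + y) = k * f x + f y.
Definition fun_bound (f : A -> K) (D : K) := 0 <= D /\ forall x, `|f x| <= D * `|x|.
Definition bdd_fun (f : A -> K) := lin_fun f /\ exists D, fun_bound f D.

(** Dual Banach algebra: A_* closed submodule of A^* with A = (A_* )^*
    via the canonical map a |-> (f |-> f a). *)
Definition dual_banach_algebra : Prop :=
  [/\ (forall f, Astar f -> bdd_fun f),
      Astar (fun _ => 0) /\ (forall k f g, Astar f -> Astar g ->
                                 Astar (fun x => k * f x + g x)),
      (forall a f, Astar f -> Astar (fun b => f (mul b a)) /\ Astar (fun b => f (mul a b))),
      (forall f, bdd_fun f ->
         (forall eps, 0 < eps -> exists g, Astar g /\ fun_bound (fun x => f x - g x) eps) ->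
         Astar f)
    & (* the canonical map A -> (A_* )^* is bijective *)
      (forall a, (forall f, Astar f -> f a = 0) -> a = 0) /\
      (forall phi : (A -> K) -> K,
         (forall k f g, Astar f -> Astar g -> phi (fun x => k * f x + g x) = k * phi f + phi g) ->
         (exists C, 0 <= C /\ forall f D, Astar f -> fun_bound f D -> `|phi f| <= C * D) ->
         exists a, forall f, Astar f -> phi f = f a) ].

Definition wstar_to (F : set_system A) (a : A) := forall f, Astar f -> f @ F --> f a.

(** (A ⊗^ A)^* = bounded bilinear forms on A x A (T b c = <T, b ⊗ c>). *)
Definition bil_form (T : A -> A -> K) :=
  (forall b, lin_fun (T b)) /\ (forall c, lin_fun (fun b => T b c)).
Definition bil_bound (T : A -> A -> K) (D : K) :=
  0 <= D /\ forall b c, `|T b c| <= D * `|b| * `|c|.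
Definition bdd_bil (T : A -> A -> K) := bil_form T /\ exists D, bil_bound T D.

(** (A ⊗^ A)^** = bounded linear functionals on (A ⊗^ A)^* (values off
    bounded bilinear forms are irrelevant). *)
Definition bdd_bidual (m : (A -> A -> K) -> K) :=
  (forall k T S, bdd_bil T -> bdd_bil S ->
      m (fun b c => k * T b c + S b c) = k * m T + m S) /\
  (exists C, 0 <= C /\ forall T D, bdd_bil T -> bil_bound T D -> `|m T| <= C * D).

(** Dual module actions on (A ⊗^ A)^* :
    <a.T, b⊗c> = <T, b⊗ca>,  <T.a, b⊗c> = <T, ab⊗c>. *)
Definition lactT (a : A) (T : A -> A -> K) : A -> A -> K := fun b c => T b (mul c a).
Definition ractT (T : A -> A -> K) (a : A) : A -> A -> K := fun b c => T (mul a b) c.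
(** Dual module actions on (A ⊗^ A)^** : <T, a.m> = <T.a, m>, <T, m.a> = <a.T, m>. *)
Definition lactB (a : A) (m : (A -> A -> K) -> K) := fun T => m (ractT T a).
Definition ractB (m : (A -> A -> K) -> K) (a : A) := fun T => m (lactT a T).

(** Weak convergence (sigma((A⊗^A)^*, (A⊗^A)^** )) of a filter on (A⊗^A)^*. *)
Definition weak_to (G : set_system (A -> A -> K)) (S : A -> A -> K) :=
  forall m, bdd_bidual m -> m @ G --> m S.

Definition wstar_weak_cont (g : A -> (A -> A -> K)) :=
  forall (a : A) (F : set_system A), Filter F -> wstar_to F a -> weak_to (g @ F) (g a).

Definition sigma_wc (T : A -> A -> K) :=
  [/\ bdd_bil T, wstar_weak_cont (fun a => lactT a T)
    & wstar_weak_cont (fun a => ractT T a)].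

Definition directed (I : Type) (le : I -> I -> Prop) :=
  [/\ inhabited I, (forall i, le i i), (forall i j k, le i j -> le j k -> le i k)
    & (forall i j, exists k, le i k /\ le j k)].

(** Elements of the projective tensor product A ⊗^ A, represented as
    sum_n u n ⊗ v n with sum_n ||u n|| ||v n|| < oo. *)
Definition ptens_rep (u v : nat -> A) :=
  exists B : K, forall N, \sum_(n < N) `|u n| * `|v n| <= B.
Definition tpair (T : A -> A -> K) (u v : nat -> A) : K :=
  lim (series (fun n => T (u n) (v n)) @ \oo).

(** pseudo-Connes amenability.  [w i] = pi_{sigma wc}(M_i) in A = (A_* )^*,
    i.e. the element with f(w i) = <pi^* f, M_i> for f in A_*. *)
Definition pseudo_connes_amenable : Prop :=
  exists (I : Type) (le : I -> I -> Prop), directed le /\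
  exists (u v : I -> nat -> A) (w : I -> A),
  [/\ (forall i, ptens_rep (u i) (v i)),
      (forall i f, Astar f -> f (w i) = tpair (fun b c => f (mul b c)) (u i) (v i)),
      (* a.M_i - M_i.a -> 0 weak* in (sigma wc((A⊗^A)^* ))^* *)
      (forall a T, sigma_wc T -> forall eps, 0 < eps -> exists i0, forall i, le i0 i ->
         `| tpair T (fun n => mul a (u i n)) (v i)
            - tpair T (u i) (fun n => mul (v i n) a) | < eps)
    &
      (forall a f, Astar f -> forall eps, 0 < eps -> exists i0, forall i, le i0 i ->
         `| f (mul (w i) a) - f a | < eps) ].

(** Johnson pseudo-Connes amenability.  [w i] = i_{A_*}^* pi^** (m_i) in
    (A_* )^* = A, i.e. the element with f(w i) = <pi^* f, m_i> for f in A_*. *)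
Definition johnson_pseudo_connes_amenable : Prop :=
  exists (I : Type) (le : I -> I -> Prop), directed le /\
  exists (m : I -> (A -> A -> K) -> K) (w : I -> A),
  [/\ (forall i, bdd_bidual (m i)),
      (forall i a T, sigma_wc T -> lactB a (m i) T = ractB (m i) a T),
      (forall i f, Astar f -> f (w i) = m i (fun b c => f (mul b c)))
    &
      (forall a eps, 0 < eps -> exists i0, forall i, le i0 i ->
         `| mul (w i) a - a | < eps) ].

End DualBanach.

(* Helly's lemma, the finite-dimensional form of Goldstine's theorem, lets each
   m_i be matched on any finite set of bounded bilinear forms by a finite tensor
   x = sum_k b_k (x) c_k.  Indexing by pairs (i, finite set of forms) gives a net
   of finite tensors M_j: against a sigma-wc form T, a.M_j - M_j.a pairs exactly
   like a.m_i - m_i.a, i.e. to 0, and f(pi(M_j) a) = f(w_i a) for f in A_*, so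
   pi(M_j) a -> a weak* because w_i a -> a in norm. *)

From mathcomp Require Import all_boot all_order all_algebra.
From mathcomp Require Import all_classical all_reals all_analysis.
From mathcomp Require Import complex ring zify.
Import Order.TTheory GRing.Theory Num.Theory.
Import numFieldNormedType.Exports.
Local Open Scope ring_scope.
Set Implicit Arguments. Unset Strict Implicit.

Section FiniteSpan.
Variables (K : fieldType) (X : Type) (n : nat) (e : X -> 'rV[K]_n).

Definition span_of (P : seq X) : 'M[K]_n := foldr (fun x S => (e x + S)%MS) 0 P.

Lemma span_of_cons_ltrank P x : ~~ (e x <= span_of P)%MS ->
  (\rank (span_of P) < \rank (span_of (x :: P)))%N.
Proof.
move=> ex; apply: rank_ltmx; rewrite ltmxE addsmxSr /=.
by apply: contra ex; apply: submx_trans (addsmxSl _ _).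
Qed.

Lemma exists_spanning_seq : exists P, forall x, (e x <= span_of P)%MS.
Proof.
suff: forall k P, (n - \rank (span_of P) <= k)%N ->
    exists P', forall x, (e x <= span_of P')%MS by move/(_ _ [::] (leqnn _)).
elim=> [|k IH] P hk; have [|/existsNP[x /negP/span_of_cons_ltrank lt_rank]] :=
  pselect (forall x, (e x <= span_of P)%MS); try by exists P.
- by have := rank_leq_col (span_of (x :: P)); lia.
- by apply: (IH (x :: P)); have := rank_leq_col (span_of (x :: P)); lia.
Qed.

Lemma span_of_combination (P : seq X) (v : 'rV_n) : (v <= span_of P)%MS ->
  exists c : seq (K * X), v = \sum_(p <- c) p.1 *: e p.2.
Proof.
elim: P v => [|x P IH] v /=.
  by rewrite submx0 => /eqP ->; exists [::]; rewrite big_nil.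
case/sub_addsmxP=> -[u1 u2] /= ->.
have [c ->] := IH _ (submxMl u2 _).
by exists ((u1 0 0, x) :: c); rewrite big_cons /= {1}[u1]mx11_scalar mul_scalar_mx.
Qed.

Lemma annihilator_span (v : 'rV_n) :
  (forall c : 'cV_n, (forall x, e x *m c = 0) -> v *m c = 0) ->
  exists c : seq (K * X), v = \sum_(p <- c) p.1 *: e p.2.
Proof.
move=> Hv; have [P HP] := exists_spanning_seq.
apply: (@span_of_combination P); rewrite submxE; apply/eqP/matrixP => i j.
have eC x : e x *m cokermx (span_of P) = 0 by apply/eqP; rewrite -submxE.
have vCj : v *m cokermx (span_of P) *m (delta_mx j 0 : 'cV_n) = 0.
  by rewrite -mulmxA; apply: Hv => x; rewrite mulmxA eC mul0mx.
by move/(congr1 (fun M : 'cV_1 => M i 0)): vCj; rewrite -colE !mxE.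
Qed.
End FiniteSpan.

Lemma In_tnth (T : Type) (s : seq T) x :
  List.In x s -> exists i, tnth (in_tuple s) i = x.
Proof.
elim: s => //= y s IH [<-|/IH[i <-]]; first by exists ord0; rewrite (tnth_nth y).
by exists (lift ord0 i); rewrite !(tnth_nth y).
Qed.

Section Tensors.
Variables (K : numFieldType) (A : normedModType K).
Implicit Types (f g : A -> K) (T S : A -> A -> K) (m : (A -> A -> K) -> K).
Implicit Types (x : seq (A * A)).

Lemma lin_fun0 f : lin_fun f -> f 0 = 0.
Proof. by move=> flin; move: (flin (-1) 0 0); rewrite scaler0 addr0 mulN1r addNr. Qed.

Lemma lin_funD f y z : lin_fun f -> f (y + z) = f y + f z.
Proof. by move=> flin; rewrite -[y]scale1r flin mul1r scale1r. Qed.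

Lemma lin_funZ f k y : lin_fun f -> f (k *: y) = k * f y.
Proof. by move=> flin; rewrite -[_ *: _]addr0 flin lin_fun0 ?addr0. Qed.

Lemma lin_funB f y z : lin_fun f -> f (y - z) = f y - f z.
Proof. by move=> flin; rewrite lin_funD // -scaleN1r lin_funZ // mulN1r. Qed.

Definition fin_pair T x : K := \sum_(p <- x) T p.1 p.2.
Definition tens_l x n : A := (nth (0, 0) x n).1.
Definition tens_r x n : A := (nth (0, 0) x n).2.

Lemma ptens_rep_seq x : ptens_rep (tens_l x) (tens_r x).
Proof.
exists (\sum_(p <- x) `|p.1| * `|p.2|).
elim: x => [|p x IH] [|N]; rewrite ?big_ord0 ?big_nil //.
- by rewrite big1_seq // => n _; rewrite /tens_l /tens_r nth_nil normr0 mul0r.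
- by apply: sumr_ge0 => q _; rewrite mulr_ge0.
- by rewrite big_ord_recl big_cons lerD2l; apply: IH.
Qed.

Lemma fin_pair_nth T x N : T 0 0 = 0 -> (size x <= N)%N ->
  \sum_(n < N) T (tens_l x n) (tens_r x n) = fin_pair T x.
Proof.
move=> T00; rewrite /fin_pair; elim: x N => [|p x IH] [|N] //= hN.
- by rewrite big_ord0 big_nil.
- by rewrite big_nil big1_seq // => n _; rewrite /tens_l /tens_r nth_nil.
- by rewrite big_ord_recl big_cons IH.
Qed.

Lemma tpair_seq T x : bil_form T -> tpair T (tens_l x) (tens_r x) = fin_pair T x.
Proof.
move=> [T1 _]; have T00 : T 0 0 = 0 by apply: lin_fun0.
rewrite /tpair; apply: lim_near_cst; first exact: norm_hausdorff.
near=> N.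
by rewrite /series /= big_mkord fin_pair_nth //; near: N; exists (size x).
Unshelve. all: by end_near.
Qed.

Definition fin_mul (mul : A -> A -> A) x : A := \sum_(p <- x) mul p.1 p.2.

Lemma fin_pair_comp_mul (mul : A -> A -> A) g x : lin_fun g ->
  g (fin_mul mul x) = fin_pair (fun b c => g (mul b c)) x.
Proof.
by move=> glin; rewrite (big_morph g (fun y z => lin_funD y z glin) (lin_fun0 glin)).
Qed.

Lemma bdd_bil0 : bdd_bil (fun _ _ : A => 0 : K).
Proof.
split; first by split=> ? ? ? ?; rewrite mulr0 addr0.
by exists 0; split=> // b c; rewrite normr0 !mul0r.
Qed.

Lemma bdd_bil_lincomb k T S : bdd_bil T -> bdd_bil S ->
  bdd_bil (fun b c => k * T b c + S b c).
Proof.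
move=> [[T1 T2] [D [D_ge0 TD]]] [[S1 S2] [E [E_ge0 SE]]]; split.
  by split=> [b|c] k' y z; rewrite ?(T1 b) ?(S1 b) ?(T2 c) ?(S2 c); ring.
exists (`|k| * D + E); split; first by rewrite addr_ge0 ?mulr_ge0.
move=> b c; apply: le_trans (ler_normD _ _) _; rewrite normrM !mulrDl -!mulrA.
by apply: lerD; rewrite ?ler_wpM2l // mulrA.
Qed.

Lemma bdd_bil_sum (I : Type) (r : seq I) (c : I -> K) (F : I -> A -> A -> K) :
  (forall i, bdd_bil (F i)) -> bdd_bil (fun b d => \sum_(i <- r) c i * F i b d).
Proof.
move=> HF; elim: r => [|i r IH].
  rewrite (_ : (fun _ _ => _) = fun _ _ => 0); first exact: bdd_bil0.
  by do 2!apply/funext=> ?; rewrite big_nil.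
rewrite (_ : (fun _ _ => _) = fun b d => c i * F i b d + \sum_(j <- r) c j * F j b d).
  exact: bdd_bil_lincomb.
by do 2!apply/funext=> ?; rewrite big_cons.
Qed.

Lemma bdd_bidual0 m : bdd_bidual m -> m (fun _ _ => 0) = 0.
Proof.
have E : (fun b c : A => -1 * (0 : K) + 0) = (fun _ _ => 0).
  by do 2!apply/funext=> ?; rewrite mulr0 addr0.
by move=> [mlin _]; have := mlin (-1) _ _ bdd_bil0 bdd_bil0; rewrite E mulN1r addNr.
Qed.

Lemma bdd_bidual_sum m (I : Type) (r : seq I) (c : I -> K) (F : I -> A -> A -> K) :
  bdd_bidual m -> (forall i, bdd_bil (F i)) ->
  m (fun b d => \sum_(i <- r) c i * F i b d) = \sum_(i <- r) c i * m (F i).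
Proof.
move=> Hm HF; elim: r => [|i r IH].
  rewrite big_nil -[RHS](bdd_bidual0 Hm).
  by congr m; do 2!apply/funext=> ?; rewrite big_nil.
rewrite big_cons -IH -Hm.1 //; last exact: bdd_bil_sum.
by congr m; do 2!apply/funext=> ?; rewrite big_cons.
Qed.

Lemma bdd_bidual_fin_interpolation m n (F : 'I_n -> A -> A -> K) :
  bdd_bidual m -> (forall i, bdd_bil (F i)) ->
  exists x, forall i, fin_pair (F i) x = m (F i).
Proof.
move=> Hm HF; pose e (p : A * A) : 'rV[K]_n := \row_i F i p.1 p.2.
have [c Hc] : exists c : seq (K * (A * A)), \row_i m (F i) = \sum_(p <- c) p.1 *: e p.2.
  apply: annihilator_span => u Hu; apply/rowP => k; rewrite ord1 !mxE.
  have Fu0 : (fun b d => \sum_i u i 0 * F i b d) = (fun _ _ => 0).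
    apply/funext => b; apply/funext => d.
    move/(congr1 (fun M : 'cV_1 => M 0 0)): (Hu (b, d)); rewrite !mxE => eu0.
    by rewrite -[RHS]eu0; apply: eq_bigr => i _; rewrite mxE mulrC.
  rewrite -[RHS](bdd_bidual0 Hm) -Fu0 bdd_bidual_sum //.
  by apply: eq_bigr => i _; rewrite mxE mulrC.
exists [seq (p.1 *: p.2.1, p.2.2) | p <- c] => i.
move/(congr1 (fun v : 'rV_n => v 0 i)): Hc; rewrite mxE summxE => ->.
rewrite /fin_pair big_map; apply: eq_bigr => p _; rewrite !mxE /=.
exact: (lin_funZ p.1 p.2.1 ((HF i).1.2 p.2.2)).
Qed.

Lemma bdd_bidual_seq_interpolation m (s : seq {T : A -> A -> K | bdd_bil T}) :
  bdd_bidual m ->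
  exists x, forall t, List.In t s -> fin_pair (proj1_sig t) x = m (proj1_sig t).
Proof.
move=> Hm; have [x Hx] := bdd_bidual_fin_interpolation
  (F := fun i => proj1_sig (tnth (in_tuple s) i)) Hm (fun i => proj2_sig _).
exists x => t ts; have [i <-] := In_tnth ts; exact: Hx.
Qed.

End Tensors.

Section BanachAlgebra.
Variables (K : numFieldType) (A : normedModType K) (mul : A -> A -> A).
Hypothesis HB : banach_algebra mul.
Implicit Types (T : A -> A -> K) (x : seq (A * A)).

Lemma bdd_bil_ractT T a : bdd_bil T -> bdd_bil (ractT mul T a).
Proof.
case: HB => _ _ mul_linr mul_norm [[T1 T2] [D [D_ge0 TD]]]; split.
  by split=> [b|c] k y z; rewrite /ractT ?mul_linr; [apply: T1 | apply: T2].
exists (D * `|a|); split=> [|b c]; first by rewrite mulr_ge0.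
apply: le_trans (TD _ _) _; rewrite -!mulrA ler_wpM2l // mulrA.
by rewrite ler_wpM2r.
Qed.

Lemma bdd_bil_lactT T a : bdd_bil T -> bdd_bil (lactT mul a T).
Proof.
case: HB => _ mul_linl _ mul_norm [[T1 T2] [D [D_ge0 TD]]]; split.
  by split=> [b|c] k y z; rewrite /lactT ?mul_linl; [apply: T1 | apply: T2].
exists (D * `|a|); split=> [|b c]; first by rewrite mulr_ge0.
apply: le_trans (TD _ _) _; rewrite [X in _ <= X](_ : _ = D * `|b| * (`|c| * `|a|)).
  by rewrite ler_wpM2l ?mulr_ge0.
by ring.
Qed.

Lemma bdd_bil_comp_mul g : bdd_fun g -> bdd_bil (fun b c => g (mul b c)).
Proof.
case: HB => _ mul_linl mul_linr mul_norm [glin [D [D_ge0 gD]]]; split.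
  by split=> [b|c] k y z; rewrite ?mul_linl ?mul_linr; apply: glin.
exists D; split=> // b c; apply: le_trans (gD _) _.
by rewrite -mulrA ler_wpM2l.
Qed.

Lemma tpair_seq_ractT T a x : bdd_bil T ->
  tpair T (fun n => mul a (tens_l x n)) (tens_r x) = fin_pair (ractT mul T a) x.
Proof. by move=> /(bdd_bil_ractT a) [bT _]; apply: tpair_seq. Qed.

Lemma tpair_seq_lactT T a x : bdd_bil T ->
  tpair T (tens_l x) (fun n => mul (tens_r x n) a) = fin_pair (lactT mul a T) x.
Proof. by move=> /(bdd_bil_lactT a) [bT _]; apply: tpair_seq. Qed.

End BanachAlgebra.

Section RefinedNet.
Variables (K : numFieldType) (A : normedModType K) (mul : A -> A -> A).
Variables (Astar : (A -> K) -> Prop) (I : Type) (le : I -> I -> Prop).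

Definition refined_index := (I * seq {T : A -> A -> K | bdd_bil T})%type.
Definition refined_le (j1 j2 : refined_index) := le j1.1 j2.1 /\ List.incl j1.2 j2.2.

Hypothesis Hdir : directed le.

Lemma directed_refined : directed refined_le.
Proof.
case: Hdir => [[i0] le_refl le_trans le_dir]; split.
- exact: inhabits (i0, [::]).
- by move=> j; split; [apply: le_refl | apply: List.incl_refl].
- move=> j1 j2 j3 [le12 incl12] [le23 incl23].
  by split; [apply: le_trans le12 le23 | apply: List.incl_tran incl12 incl23].
- move=> j1 j2; have [k [le1 le2]] := le_dir j1.1 j2.1.
  exists (k, j1.2 ++ j2.2).
  split; split=> //; [apply: List.incl_appl | apply: List.incl_appr].
  all: exact: List.incl_refl.
Qed.

Hypothesis HB : banach_algebra mul.
Hypothesis Hbdd : forall f, Astar f -> bdd_fun f.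
Hypothesis Hmodr : forall a f, Astar f -> Astar (fun b => f (mul b a)).
Variables (m : I -> (A -> A -> K) -> K) (w : I -> A) (X : refined_index -> seq (A * A)).
Hypothesis Hcomm :
  forall i a T, sigma_wc mul Astar T -> lactB mul a (m i) T = ractB mul (m i) a T.
Hypothesis Hw : forall i f, Astar f -> f (w i) = m i (fun b c => f (mul b c)).
Hypothesis Hunit :
  forall a eps, 0 < eps -> exists i0, forall i, le i0 i -> `|mul (w i) a - a| < eps.
Hypothesis HX :
  forall j t, List.In t j.2 -> fin_pair (proj1_sig t) (X j) = m j.1 (proj1_sig t).

Lemma refined_asymptotically_central a T : sigma_wc mul Astar T ->
  exists j0, forall j, refined_le j0 j ->
    fin_pair (ractT mul T a) (X j) = fin_pair (lactT mul a T) (X j).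
Proof.
move=> hT; have [bT _ _] := hT; case: Hdir => [[i0] _ _ _].
exists (i0, [:: exist _ _ (bdd_bil_ractT HB a bT); exist _ _ (bdd_bil_lactT HB a bT)]).
move=> j [_ incl_j]; rewrite (HX (incl_j _ (or_introl erefl))).
by rewrite (HX (incl_j _ (or_intror (or_introl erefl)))); apply: Hcomm.
Qed.

Lemma refined_approximate_unit a f : Astar f -> forall eps, 0 < eps ->
  exists j0, forall j, refined_le j0 j -> `|f (mul (fin_mul mul (X j)) a) - f a| < eps.
Proof.
move=> hf eps eps_gt0; have [flin [D [D_ge0 fD]]] := Hbdd hf.
have hfa := Hmodr a hf; have fa_bdd := Hbdd hfa.
have D1_gt0 : 0 < D + 1 := ltr_wpDl D_ge0 ltr01.
have [i0 Hi0] := Hunit a (divr_gt0 eps_gt0 D1_gt0).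
exists (i0, [:: exist _ _ (bdd_bil_comp_mul HB fa_bdd)]) => j [le_j incl_j].
have -> : f (mul (fin_mul mul (X j)) a) = f (mul (w j.1) a).
  rewrite (fin_pair_comp_mul _ _ fa_bdd.1) (HX (incl_j _ (or_introl erefl))) /=.
  by rewrite (Hw _ hfa).
rewrite -lin_funB //; apply: le_lt_trans (fD _) _.
apply: le_lt_trans (_ : `|mul (w j.1) a - a| * (D + 1) < eps).
  by rewrite mulrC ler_wpM2l // lerDl.
by rewrite -(ltr_pdivlMr _ _ D1_gt0); apply: Hi0.
Qed.

End RefinedNet.

Local Open Scope complex_scope.

Theorem lemma2p4 (R : realType) (A : completeNormedModType R[i])
    (mul : A -> A -> A) (Astar : (A -> R[i]) -> Prop) :
  banach_algebra mul ->
  dual_banach_algebra mul Astar ->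
  johnson_pseudo_connes_amenable mul Astar ->
  pseudo_connes_amenable mul Astar.
Proof.
move=> HB [Hbdd _ Hmod _ _] [I [le [Hdir [m [w [Hm Hcomm Hw Hunit]]]]]].
have Hmodr a f : Astar f -> Astar (fun b => f (mul b a)) by move=> /(Hmod a) [].
have [X HX] :=
  choice (fun j : refined_index A I => bdd_bidual_seq_interpolation j.2 (Hm j.1)).
exists (refined_index A I), (refined_le le); split; first exact: directed_refined.
exists (fun j => tens_l (X j)), (fun j => tens_r (X j)), (fun j => fin_mul mul (X j)); split.
- by move=> j; apply: ptens_rep_seq.
- move=> j f /Hbdd f_bdd; rewrite tpair_seq; last exact: (bdd_bil_comp_mul HB f_bdd).1.
  exact: fin_pair_comp_mul f_bdd.1.
- move=> a T hT eps eps_gt0; have [bT _ _] := hT.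
  have [j0 Hj0] := refined_asymptotically_central Hdir HB Hcomm HX a hT.
  exists j0 => j /Hj0 central_j.
  by rewrite tpair_seq_ractT // tpair_seq_lactT // central_j subrr normr0.
- move=> a f; exact: (refined_approximate_unit HB Hbdd Hmodr Hw Hunit HX a).
Qed.
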